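(* Let $\Sigma$ be a finite alphabet with $|\Sigma|\ge2$ and let $\delta$ be any Hamming compatible metric on $\Sigma^*$ (no uniformity assumed). Let $u,w\in\Sigma^*$ with $l(u)\ge l(w)$, and let $v$ be a Hamming opposite of $u$ satisfying $H(\underline{u},\underline{w})+H(\underline{v},\underline{w})=l(w)$. Then $\delta(u,w)\ge d_2(u,w)$ or $\delta(v,w)\ge d_2(v,w)$. Consequently, for every $w\in\Sigma^*$ there is a sequence of words $u_n\in\Sigma_n$ ($n\ge l(w)$) with $\delta(u_n,w)\ge d_2(u_n,w)$; in particular $\delta(u_n,w)\to\infty$ as $n\to\infty$.
   Context: $\Sigma_n$ is the set of words of length $n$ over $\Sigma$, $\Sigma^*$ the set of all finite words, $l(u)$ the length of $u$, $H$ the Hamming distance between equal-length words. For arbitrary $x,y$, if $l(x)\ge l(y)$, $\underline{x}$ is the prefix of $x$ of length $l(y)$ and $\underline{y}=y$ (symmetrically otherwise). Metrics are integer-valued; a metric $\delta$ on $\Sigma^*$ is Hamming compatible if $\delta(x,y)=H(x,y)$ whenever $l(x)=l(y)$. $d_2(x,y)=H(\underline{x},\underline{y})+\lceil |l(x)-l(y)|/2\rceil$. Two words of the same length $n$ are Hamming opposites if their Hamming distance is $n$. *)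

From mathcomp Require Import all_boot.
Set Implicit Arguments. Unset Strict Implicit. Unset Printing Implicit Defensive.

Section Words.
Variable T : finType.

(* Hamming distance: number of positions where the words differ
   (used only on equal-length words, or on the truncations below). *)
Definition hamming (x y : seq T) : nat :=
  count (fun p => p.1 != p.2) (zip x y).

(* underline x (w.r.t. y): prefix of x of length min (l x) (l y). *)
Definition ul (x y : seq T) : seq T := take (minn (size x) (size y)) x.

Definition is_metric (d : seq T -> seq T -> nat) : Prop :=
  (forall x y, d x y = 0 <-> x = y) /\
  (forall x y, d x y = d y x) /\
  (forall x y z, d x z <= d x y + d y z).

Definition hamming_compatible (d : seq T -> seq T -> nat) : Prop :=
  forall x y, size x = size y -> d x y = hamming x y.

Definition ndist (a b : nat) : nat := (a - b) + (b - a).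

Definition d2 (x y : seq T) : nat :=
  hamming (ul x y) (ul y x) + uphalf (ndist (size x) (size y)).

End Words.

From mathcomp Require Import all_boot.
From mathcomp Require Import zify.

Set Implicit Arguments.
Unset Strict Implicit.
Unset Printing Implicit Defensive.

(* Let l(w) <= l(u) = l(v) = n, m = l(w), k = ceil((n-m)/2), and
   write h_u = H(u_,w_), h_v = H(v_,w_), so that h_u + h_v = m and
   d_2(u,w) = h_u + k, d_2(v,w) = h_v + k.  If both delta(u,w) < d_2(u,w) and
   delta(v,w) < d_2(v,w), the triangle inequality through w and Hamming
   compatibility (u, v are Hamming opposites) give
     n = delta(u,v) <= delta(u,w) + delta(w,v) <= m + 2k - 2 <= n - 1,
   a contradiction.  For the sequence: pad w with a fixed letter up to length
   n and let v be its image under a fixed-point-free map of the alphabet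
   (which exists as |Sigma| >= 2); v is a Hamming opposite of the padded word
   and the two truncations to length l(w) are w itself and its total opposite,
   so the first part applies; we keep whichever word works.  Finally
   d_2(u_n,w) >= ceil((n - l(w))/2), which tends to infinity. *)

Section Words.
Variable T : finType.
Implicit Types x y u v w : seq T.

Lemma hamming_refl x : hamming x x = 0.
Proof. by elim: x => //= a x IH; rewrite /hamming /= eqxx. Qed.

Lemma hamming_map_l (f : T -> T) x :
  (forall a, f a != a) -> hamming (map f x) x = size x.
Proof.
by move=> moves; elim: x => //= a x IH; rewrite /hamming /= moves -/(hamming _ _) IH.
Qed.

Lemma hamming_map_r (f : T -> T) x :
  (forall a, f a != a) -> hamming x (map f x) = size x.
Proof.
by move=> moves; elim: x => //= a x IH; rewrite /hamming /= eq_sym moves -/(hamming _ _) IH.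
Qed.

Lemma ul_shorter x y : size y <= size x -> ul y x = y.
Proof. by move=> le_yx; rewrite /ul (minn_idPl le_yx) take_size. Qed.

Lemma ul_longer x y : size y <= size x -> ul x y = take (size y) x.
Proof. by move=> le_yx; rewrite /ul (minn_idPr le_yx). Qed.

Lemma d2_longer u w : size w <= size u ->
  d2 u w = hamming (take (size w) u) w + uphalf (size u - size w).
Proof.
move=> le_wu; rewrite /d2 ul_longer // ul_shorter // /ndist.
by rewrite (_ : size w - size u = 0) ?addn0 //; apply/eqP; rewrite subn_eq0.
Qed.

Lemma d2_ge_half_gap x y : (size x - size y)./2 <= d2 x y.
Proof.
rewrite /d2 /ndist; apply: leq_trans (leq_addl _ _).
by rewrite uphalfE; apply: half_leq; lia.
Qed.

Lemma double_uphalf_le n : (uphalf n).*2 <= n.+1.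
Proof. by rewrite uphalfK; case: odd. Qed.

Lemma derangement_exists : 1 < #|T| -> exists f : T -> T, forall a, f a != a.
Proof.
case/card_gt1P=> a [b [_ _ neq_ab]].
exists (fun c => if c == a then b else a) => c.
by case: (eqVneq c a) => [->|//]; rewrite eq_sym.
Qed.

Section HammingCompatible.
Variable delta : seq T -> seq T -> nat.
Hypothesis delta_sym : forall x y, delta x y = delta y x.
Hypothesis delta_triangle : forall x y z, delta x z <= delta x y + delta y z.
Hypothesis delta_hamming : hamming_compatible delta.

Lemma opposite_pair_far u w v :
  size w <= size u -> size v = size u -> hamming u v = size u ->
  hamming (ul u w) (ul w u) + hamming (ul v w) (ul w v) = size w ->
  d2 u w <= delta u w \/ d2 v w <= delta v w.
Proof.
move=> le_wu size_v opposite split_w.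
have le_wv : size w <= size v by rewrite size_v.
case: (leqP (d2 u w) (delta u w)) => [|near_u]; first by left.
case: (leqP (d2 v w) (delta v w)) => [|near_v]; first by right.
exfalso.
(* n = delta(u,v) <= delta(u,w) + delta(v,w) <= m + 2k - 2 <= n - 1. *)
have delta_uv : delta u v = size u by rewrite delta_hamming ?size_v.
have tri := delta_triangle u w v; rewrite delta_uv (delta_sym w v) in tri.
move: near_u near_v split_w.
rewrite !d2_longer // (ul_longer le_wu) (ul_longer le_wv).
rewrite (ul_shorter le_wu) (ul_shorter le_wv) size_v.
have := double_uphalf_le (size u - size w); lia.
Qed.

Variable flip : T -> T.
Hypothesis flip_moves : forall a, flip a != a.
Variable filler : T.

Definition pad w n : seq T := w ++ nseq (n - size w) filler.

Lemma size_pad w n : size w <= n -> size (pad w n) = n.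
Proof. by move=> le_wn; rewrite size_cat size_nseq; lia. Qed.

Definition far_word w n : seq T :=
  let u := pad w n in if d2 u w <= delta u w then u else map flip u.

(* far_word w n has length n and is delta-far from w: the padded word and
   its opposite split the distance to w as H(w,w) + H(f(w),w) = l(w). *)
Lemma far_wordP w n : size w <= n ->
  size (far_word w n) = n /\ d2 (far_word w n) w <= delta (far_word w n) w.
Proof.
move=> le_wn; set u := pad w n.
have size_u : size u = n by exact: size_pad.
have le_wu : size w <= size u by rewrite size_u.
have le_wfu : size w <= size (map flip u) by rewrite size_map.
have prefix_u : take (size w) u = w by rewrite take_size_cat.
have := @opposite_pair_far u w (map flip u) le_wu.
rewrite size_map hamming_map_r // => /(_ erefl erefl).
rewrite (ul_shorter le_wu) (ul_shorter le_wfu).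
rewrite (ul_longer le_wu) (ul_longer le_wfu).
rewrite -map_take prefix_u hamming_refl hamming_map_l // => /(_ erefl) far.
rewrite /far_word -/u /=; case: ifP => [-> //|not_u]; rewrite size_map size_u.
by case: far; rewrite ?not_u.
Qed.

Lemma far_word_unbounded w M :
  exists N, forall n, N <= n -> M <= delta (far_word w n) w.
Proof.
exists (size w + M.*2) => n le_Nn.
have [size_n far] := far_wordP (leq_trans (leq_addr _ _) le_Nn).
apply: leq_trans far; apply: leq_trans (d2_ge_half_gap _ _).
by rewrite size_n -(half_double M); apply: half_leq; lia.
Qed.

End HammingCompatible.
End Words.

Theorem mainTheorem9 (T : finType) (delta : seq T -> seq T -> nat) :
  1 < #|T| ->
  is_metric delta -> hamming_compatible delta ->
  (forall u w v : seq T,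
     size w <= size u ->
     size v = size u -> hamming u v = size u ->
     hamming (ul u w) (ul w u) + hamming (ul v w) (ul w v) = size w ->
     d2 u w <= delta u w \/ d2 v w <= delta v w) /\
  (forall w : seq T, exists un : nat -> seq T,
     (forall n, size w <= n -> size (un n) = n /\ d2 (un n) w <= delta (un n) w) /\
     (forall M, exists N, forall n, N <= n -> M <= delta (un n) w)).
Proof.
move=> card_T [_ [delta_sym delta_triangle]] delta_hamming.
split=> [u w v|w]; first exact: opposite_pair_far.
have [flip flip_moves] := derangement_exists card_T.
have [filler _] := card_gt1P card_T.
exists (far_word delta flip filler w); split.
- exact: far_wordP.
- exact: far_word_unbounded.
Qed.
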